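(* Let $G$ be a finite group with an abelian normal subgroup $A$ such that $G/A$ is cyclic, and let $s$ be an automorphism of $G$ of order $2$ with $s(A)=A$. Suppose there is a subgroup $H\le G$ with $H\cap A=\{1\}$ and $G = s(H)H$. Then $A$ has a cyclic subgroup of index at most $2$.
   Context: $s(H)H$ denotes the set of products $ab$ with $a\in s(H)$, $b\in H$. *)

From mathcomp Require Import all_boot all_fingroup all_solvable.

(* Since H :&: A = 1, H embeds in the cyclic group G / A, so H = <[h]>; as
   s maps A onto A, the subgroup s @: H = <[s h]> also meets A trivially and,
   having the order of H, has the same image in G / A. Hence s h = d * y with
   d in A and y in H, and G = <[s h]> * H shows that every element of A is a
   twisted power (d * y) ^+ j * y ^- j = d * d ^ u * ... * d ^ (u ^+ j.-1),
   where u = y^-1.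

   Write D z = [~ z, u] (additively D is sigma - 1, sigma the conjugation by u)
   and A_k = D^k(A). A sigma-stable subgroup K with d in K * A_1 contains A:
   replacing d by d * D b only twists the cover by the coboundary [~ b, u ^+ j].
   Expanding twisted powers binomially, d's j-th twisted power is
   d ^+ j * (D d) ^+ 'C(j, 2) * (D^2 d) ^+ 'C(j, 3) modulo A_3, and the cover is
   periodic modulo any sigma-stable subgroup containing one of its terms. This
   yields A = <[d]> * A^p for every odd prime p, and A_2 <= A^2; the latter
   bounds #|A : A^4| by 8 and gives A^2 <= <[d]> * A^4. Removing one prime
   factor of #|A| at a time, A^2 <= <[d]>, and as A = <[d]> * <[D d]> * A^2,
   the index of <[d]> in A is at most 2.
   Below, A is the abelian group Z, D is [commu], A_k is [useries k] and A^k
   is [powm k @* Z]. *)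

From mathcomp Require Import all_boot all_fingroup all_solvable.
Set Implicit Arguments.
Unset Strict Implicit.
Unset Printing Implicit Defensive.
Import GroupScope.

Lemma mem_joingl (gT : finGroupType) (A B : {set gT}) x : x \in A -> x \in A <*> B.
Proof. exact: subsetP (joing_subl A B) x. Qed.

Lemma mem_joingr (gT : finGroupType) (A B : {set gT}) x : x \in B -> x \in A <*> B.
Proof. exact: subsetP (joing_subr A B) x. Qed.

Lemma mem_expg_coprime (gT : finGroupType) (L : {group gT}) x r p :
  coprime r p -> x ^+ r \in L -> x ^+ p \in L -> x \in L.
Proof.
have [-> | r_gt0] := posnP r.
  by rewrite /coprime gcd0n => /eqP-> _; rewrite expg1.
move=> co_rp Lxr Lxp; have [a _] := Bezoutl p r_gt0.
rewrite (eqP co_rp) => /dvdnP[m def_mr].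
have def_x : x ^+ (m * r) * (x ^+ p ^+ a)^-1 = x.
  by rewrite -def_mr expgD expg1 mulnC expgM mulgK.
have Lxmr : x ^+ (m * r) \in L by rewrite mulnC expgM groupX.
by rewrite -def_x groupM // groupV groupX.
Qed.

Lemma expg2_mem_index_le2 (gT : finGroupType) (G H : {group gT}) x :
  G \subset 'N(H) -> #|G : H| <= 2 -> x \in G -> x ^+ 2 \in H.
Proof.
move=> nHG iGH Gx; have Nx := subsetP nHG x Gx.
apply: coset_idr; first by rewrite groupX.
rewrite morphX //; apply/eqP; rewrite -order_dvdn.
apply: dvdn_trans (_ : #|G : H| %| 2).
  by rewrite -card_quotient // order_dvdG ?mem_quotient.
by case: #|G : H| (indexg_gt0 G H) iGH => [|[|[|]]].
Qed.

Lemma order4_card_join (gT : finGroupType) (K : {group gT}) d :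
  d \in 'N(K) -> d ^+ 4 \in K -> d ^+ 2 \notin K -> 4 * #|K| <= #|<[d]> <*> K|.
Proof.
move=> Nd Kd4 Kd2; have nKY : <[d]> <*> K \subset 'N(K).
  by rewrite join_subG cycle_subG Nd normG.
have ord_d : #[coset K d] = 4.
  have dvd4 : #[coset K d] %| 4 by rewrite order_dvdn -morphX //; apply/eqP/coset_id.
  have ndvd2 : ~~ (#[coset K d] %| 2).
    rewrite order_dvdn -morphX //.
    by apply: contra Kd2 => /eqP/coset_idr->; rewrite ?groupX.
  by move: dvd4 ndvd2 (dvdn_leq (isT : 0 < 4) dvd4); case: #[_] => [|[|[|[|[|]]]]].
have : 4 %| #|<[d]> <*> K : K|.
  by rewrite -card_quotient // -ord_d order_dvdG ?mem_quotient ?mem_joingl ?cycle_id.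
rewrite -(Lagrange (joing_subr <[d]> K)) mulnC leq_pmul2l //.
exact: dvdn_leq (indexg_gt0 _ _).
Qed.

Section TwistedPowers.
Variables (gT : finGroupType) (u : gT).

(* [twpow d j] is the product of the conjugates d ^ (u ^+ i), i < j. *)
Definition twpow (d : gT) j := (d * u^-1) ^+ j * u ^+ j.

Definition twcover (X : {set gT}) d := forall x, x \in X -> exists j, x = twpow d j.

Lemma twpow0 d : twpow d 0 = 1.
Proof. by rewrite /twpow !expg0 mulg1. Qed.

Lemma twpowS d j : twpow d j.+1 = d * twpow d j ^ u.
Proof. by rewrite /twpow expgS expgSr conjgE !mulgA. Qed.

Lemma twpowD d i j : twpow d (i + j) = twpow d i * twpow d j ^ (u ^+ i).
Proof.
rewrite /twpow conjgE !mulgA mulgK expgD -!mulgA; congr (_ * (_ * _)).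
by rewrite -expgD addnC expgD.
Qed.

Lemma twpow_commg b j : twpow [~ b, u] j = [~ b, u ^+ j].
Proof.
elim: j => [|j IHj]; first by rewrite twpow0 expg0 commg1.
by rewrite twpowS IHj expgSr commgMJ.
Qed.

Lemma twpow_mem (X : {group gT}) d j : u \in 'N(X) -> d \in X -> twpow d j \in X.
Proof.
move=> nXu Xd; elim: j => [|j IHj]; first by rewrite twpow0.
by rewrite twpowS groupM // memJ_norm.
Qed.

Lemma twpow_modn (K : {group gT}) d n j :
  u \in 'N(K) -> twpow d n \in K -> twpow d j \in twpow d (j %% n) *: K.
Proof.
move=> nKu Kdn; have Kdqn q : twpow d (q * n) \in K.
  elim: q => [|q IHq]; first by rewrite twpow0.
  by rewrite mulSn twpowD groupM // memJ_norm // groupX.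
by rewrite {1}(divn_eq j n) addnC twpowD mem_lcoset mulKg memJ_norm ?groupX.
Qed.

Lemma twcover_card (X K : {group gT}) d n :
  u \in 'N(K) -> 0 < n -> twpow d n \in K -> twcover X d -> #|X| <= n * #|K|.
Proof.
move=> nKu n_gt0 Kdn covXd.
pose cosets := [set twpow d (nat_of_ord rk.1) * rk.2 | rk in setX [set: 'I_n] K].
have sXcosets : X \subset cosets.
  apply/subsetP => _ /covXd[j ->]; have := twpow_modn j nKu Kdn.
  case/lcosetP=> k Kk ->; apply/imsetP.
  by exists (Ordinal (ltn_pmod j n_gt0), k); rewrite ?inE.
apply: leq_trans (subset_leq_card sXcosets) _.
by apply: leq_trans (leq_imset_card _ _) _; rewrite cardsX cardsT card_ord.
Qed.

End TwistedPowers.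

Section AbelianTwist.
Variables (gT : finGroupType) (Z : {group gT}) (u : gT).
Hypotheses (cZZ : abelian Z) (nZu : u \in 'N(Z)).

Local Notation twpow := (twpow u).
Local Notation twcover := (twcover u).

Lemma commZ x y : x \in Z -> y \in Z -> commute x y.
Proof. by move=> Zx Zy; apply: (centsP cZZ). Qed.

Lemma mulgZAC x y z : y \in Z -> z \in Z -> x * y * z = x * z * y.
Proof. by move=> Zy Zz; rewrite -mulgA (commZ Zy Zz) mulgA. Qed.

Lemma commgu_mem x : x \in Z -> [~ x, u] \in Z.
Proof. by move=> Zx; rewrite commgEl groupM ?groupV ?memJ_norm. Qed.

(* The underlying maps are locked: otherwise rewriting unfolds [~ x, u] and
   x ^+ 2 into products and matches them with lemmas about products. *)
Fact commu_key : unit. Proof. by []. Qed.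
Definition commu_fun := locked_with commu_key (fun x => [~ x, u]).

Lemma morphic_commu : morphic Z commu_fun.
Proof.
apply/morphicP => x y Zx Zy; rewrite [commu_fun]unlock commMgJ; congr (_ * _).
by rewrite conjgE (commZ (commgu_mem Zx) Zy) mulKg.
Qed.

Definition commu : {morphism Z >-> gT} := morphm_morphism morphic_commu.

Lemma commuE x : commu x = [~ x, u].
Proof. by change (commu_fun x = [~ x, u]); rewrite [commu_fun]unlock. Qed.

Lemma commuJ x : commu (x ^ u) = commu x ^ u.
Proof. by rewrite !commuE conjRg [u ^ u]conjgE mulKg. Qed.

Fact powm_key : unit. Proof. by []. Qed.
Definition powm_fun k := locked_with powm_key (fun x : gT => x ^+ k).

Lemma morphic_powm k : morphic Z (powm_fun k).
Proof.
by apply/morphicP => x y Zx Zy; rewrite [powm_fun k]unlock; apply/expgMn/commZ.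
Qed.

Definition powm k : {morphism Z >-> gT} := morphm_morphism (morphic_powm k).

Lemma powmE k x : powm k x = x ^+ k.
Proof. by change (powm_fun k x = x ^+ k); rewrite [powm_fun k]unlock. Qed.

Lemma norm_morphim (f : {morphism Z >-> gT}) (X : {group gT}) :
  {in Z, forall x, f (x ^ u) = f x ^ u} -> X \subset Z -> u \in 'N(X) ->
  u \in 'N(f @* X).
Proof.
move=> fJ sXZ nXu; apply/normP/eqP; rewrite eqEcard cardJg leqnn andbT.
apply/subsetP=> _ /imsetP[_ /morphimP[x Zx Xx ->] ->].
by rewrite -fJ // mem_morphim ?memJ_norm.
Qed.

Lemma norm_commu (X : {group gT}) : X \subset Z -> u \in 'N(X) -> u \in 'N(commu @* X).
Proof. by apply: norm_morphim => x _; apply: commuJ. Qed.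

Lemma norm_powm k (X : {group gT}) : X \subset Z -> u \in 'N(X) -> u \in 'N(powm k @* X).
Proof. by apply: norm_morphim => x _; rewrite !powmE conjXg. Qed.

Lemma commu_sub (X : {set gT}) : commu @* X \subset Z.
Proof. by apply/subsetP=> _ /morphimP[x Zx _ ->]; rewrite commuE commgu_mem. Qed.

Lemma commu_subS (X : {group gT}) : u \in 'N(X) -> commu @* X \subset X.
Proof.
move=> nXu; apply/subsetP=> _ /morphimP[x _ Xx ->].
by rewrite commuE commgEl groupM ?groupV ?memJ_norm.
Qed.

Lemma powm_sub k (X : {set gT}) : powm k @* X \subset Z.
Proof. by apply/subsetP=> _ /morphimP[x Zx _ ->]; rewrite powmE groupX. Qed.

Definition useries k : {group gT} := iter k (fun X : {group gT} => (commu @* X)%G) Z.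

Lemma useriesS k : useries k.+1 = commu @* useries k :> {set gT}.
Proof. by []. Qed.

Lemma useries_sub k : useries k \subset Z.
Proof. by case: k => [|k]; rewrite ?useriesS ?commu_sub. Qed.

Lemma useries_subS k : useries k.+1 \subset useries k.
Proof. by elim: k => [|k IHk]; rewrite useriesS ?commu_sub ?morphimS. Qed.

Lemma norm_useries k : u \in 'N(useries k).
Proof.
by elim: k => [|k IHk]; rewrite ?useriesS ?norm_commu ?useries_sub.
Qed.

Lemma commu_useries k x : x \in useries k -> commu x \in useries k.+1.
Proof. by move=> Vx; rewrite useriesS mem_morphim ?(subsetP (useries_sub k)). Qed.

Lemma twpowM d e j :
  d \in Z -> e \in Z -> twpow (d * e) j = twpow d j * twpow e j.
Proof.
move=> Zd Ze; elim: j => [|j IHj]; first by rewrite !twpow0 mulg1.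
have ZPdu : twpow d j ^ u \in Z by rewrite memJ_norm ?twpow_mem.
rewrite !twpowS IHj conjMg; move: (twpow d j ^ u) (twpow e j ^ u) ZPdu => a b Za.
by rewrite -!mulgA (mulgA e) (commZ Ze Za) -mulgA.
Qed.

Lemma commu_twpow e j : e \in Z -> commu (twpow e j) = twpow (commu e) j.
Proof.
move=> Ze; elim: j => [|j IHj]; first by rewrite !twpow0 morph1.
by rewrite !twpowS morphM ?memJ_norm ?twpow_mem // commuJ IHj.
Qed.

Lemma twcover_commu (X : {set gT}) e :
  e \in Z -> twcover X e -> twcover (commu @* X) (commu e).
Proof.
move=> Ze covXe _ /morphimP[x Zx Xx ->]; have [j ->] := covXe x Xx.
by exists j; rewrite commu_twpow.
Qed.

Lemma twpow_lcoset (X : {group gT}) e j :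
  X \subset Z -> u \in 'N(X) -> e \in X -> twpow e j \in e ^+ j *: commu @* X.
Proof.
move=> sXZ nXu Xe; elim: j => [|j]; first by rewrite twpow0 expg0 lcoset_refl.
case/lcosetP=> v Vv def_P; apply/lcosetP; exists (v * commu (twpow e j)).
  by rewrite groupM // mem_morphim ?twpow_mem ?(subsetP sXZ).
by rewrite twpowS conjg_mulR -commuE def_P expgS !mulgA.
Qed.

Lemma twcover_sub_cycle (X : {group gT}) e :
  X \subset Z -> u \in 'N(X) -> e \in X -> twcover X e ->
  X \subset <[e]> * commu @* X.
Proof.
move=> sXZ nXu Xe covXe; apply/subsetP=> _ /covXe[j ->].
by have /lcosetP[v Vv ->] := twpow_lcoset j sXZ nXu Xe; rewrite mem_mulg ?mem_cycle.
Qed.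

Lemma twpow_binomial e j : e \in Z ->
  exists2 w, w \in useries 3 &
    twpow e j = e ^+ j * commu e ^+ 'C(j, 2) * commu (commu e) ^+ 'C(j, 3) * w.
Proof.
move=> Ze; have inZ k x : x \in useries k -> x \in Z := subsetP (useries_sub k) x.
have Vf : commu e \in useries 1 by apply: commu_useries.
have Vg := commu_useries Vf; have Vh := commu_useries Vg.
elim: j => [|j [w Vw def_P]].
  by exists 1; rewrite ?group1 // twpow0 !bin0n !expg0 !mulg1.
exists (w * commu (commu (commu e)) ^+ 'C(j, 3) * commu w).
  by rewrite groupM ?(subsetP (useries_subS 3) _ (commu_useries Vw)) ?groupM ?groupX.
have Zf := inZ _ _ Vf; have Zg := inZ _ _ Vg; have Zw := inZ _ _ Vw.
rewrite twpowS conjg_mulR -commuE def_P !morphM ?groupM ?groupX //.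
rewrite !morphX // !binS bin1 !expgD expgS !mulgA.
have [Zfj Zga Zgb] : [/\ commu e ^+ j \in Z, commu (commu e) ^+ 'C(j, 2) \in Z
                       & commu (commu e) ^+ 'C(j, 3) \in Z] by rewrite !groupX.
by rewrite (mulgZAC _ Zw Zfj) (mulgZAC _ Zgb Zfj) (mulgZAC _ Zw Zga).
Qed.

Lemma twpow_lcoset2 e j :
  e \in Z -> twpow e j \in e ^+ j * commu e ^+ 'C(j, 2) *: useries 2.
Proof.
move=> Ze; have [w Vw ->] := twpow_binomial j Ze; rewrite -mulgA mem_lcoset mulKg.
apply: groupM; last exact: (subsetP (useries_subS 2)).
by apply: groupX; do 2 apply: commu_useries.
Qed.

Lemma twpow4_mem e : e \in Z -> twpow e 4 \in powm 2 @* Z <*> useries 3.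
Proof.
move=> Ze; have KZ2 x : x \in Z -> x ^+ 2 \in powm 2 @* Z.
  by move=> Zx; rewrite -powmE mem_morphim.
have Vf : commu e \in useries 1 by apply: commu_useries.
have Zf := subsetP (useries_sub 1) _ Vf.
have Zg := subsetP (useries_sub 2) _ (commu_useries Vf).
have [w Vw ->] := twpow_binomial 4 Ze; apply: groupM; last exact: mem_joingr.
rewrite (_ : 'C(4, 2) = 3 * 2)%N // (_ : 'C(4, 3) = 2 * 2)%N //.
rewrite [e ^+ 4](expgM e 2 2) (expgM _ 3 2) (expgM _ 2 2); apply: mem_joingl.
by apply: groupM; [apply: groupM|]; apply: KZ2; rewrite groupX.
Qed.

Lemma twcover_absorb (X K : {group gT}) e :
  X \subset Z -> K \subset Z -> u \in 'N(K) -> e \in Z -> twcover X e ->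
  e \in K <*> commu @* X -> X \subset K.
Proof.
move=> sXZ sKZ nKu Ze covXe.
rewrite cent_joinEr ?(sub_abelian_cent2 cZZ) ?commu_sub //.
case/mulsgP=> k _ Kk /morphimP[y Zy Xy ->] def_e.
have Kc : e * [~ y^-1, u] \in K by rewrite def_e -commuE morphV // mulgK.
have twpow_e j : twpow e j = twpow (e * [~ y^-1, u]) j * [~ y^-1, u ^+ j]^-1.
  by rewrite twpowM ?commgu_mem ?groupV // twpow_commg mulgK.
move: (y^-1) (groupVr Xy) (e * _) Kc twpow_e => b Xb c Kc twpow_e.
have [i def_b] := covXe b Xb.
have Kb : b \in K.
  rewrite -(memJ_norm b (groupX i nKu)).
  suff -> : b ^ u ^+ i = twpow c i by apply: twpow_mem.
  move: def_b; rewrite twpow_e commgEl invMg invgK mulgA -{1}(mul1g b).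
  by move/mulIg/esym/eqP; rewrite -eq_mulgV1 eq_sym => /eqP.
apply/subsetP=> _ /covXe[j ->]; rewrite twpow_e groupM ?twpow_mem //.
by rewrite groupV commgEl groupM ?groupV ?memJ_norm ?groupX.
Qed.

(* Modulo K <*> [X, u] the cover of Z by twpow d is n-periodic, so the
   condition on r < n puts X inside K <*> [X, u], and absorption applies. *)
Lemma twcover_descent (X K : {group gT}) d e n :
  twcover Z d -> X \subset Z -> u \in 'N(X) -> e \in X -> twcover X e ->
  K \subset Z -> u \in 'N(K) -> 0 < n -> twpow d n \in K <*> commu @* X ->
  (forall r, 0 < r < n -> twpow d r \notin K <*> X) -> X \subset K.
Proof.
move=> covZd sXZ nXu Xe covXe sKZ nKu n_gt0 Mdn Ndr.
have sVX := commu_subS nXu.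
have nMu : u \in 'N(K <*> commu @* X).
  by rewrite -sub1set normsY // sub1set ?norm_commu.
have sMKX : K <*> commu @* X \subset K <*> X.
  by rewrite join_subG joing_subl (subset_trans sVX) ?joing_subr.
apply: twcover_absorb covXe _ => //; first exact: (subsetP sXZ).
apply: (subsetP _ e Xe); apply/subsetP=> x Xx.
have [j def_x] := covZd x (subsetP sXZ x Xx).
have /lcosetP[m Mm def_x'] := twpow_modn j nMu Mdn; rewrite -def_x in def_x'.
have [r0 | r_gt0] := posnP (j %% n); first by rewrite def_x' r0 twpow0 mul1g.
have r_lt_n : 0 < j %% n < n by rewrite r_gt0 ltn_pmod.
case/negP: (Ndr _ r_lt_n).
rewrite -(mulgK m (twpow d _)) -def_x' groupM ?groupV ?(subsetP sMKX m Mm) //.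
exact: (subsetP (joing_subr K X)).
Qed.

Lemma sub_of_mul_powm_primes (W C : {group gT}) :
  W \subset Z -> C \subset Z -> (forall p, prime p -> W \subset C * powm p @* W) ->
  W \subset C.
Proof.
move=> sWZ sCZ sW_CWp.
suff sW_CWn n : 0 < n -> W \subset C * powm n @* W.
  apply/subsetP=> x Wx.
  have /mulsgP[c _ Cc /morphimP[y _ Wy ->] ->] := subsetP (sW_CWn _ (cardG_gt0 W)) x Wx.
  by rewrite powmE expg_cardG // mulg1.
elim/ltn_ind: n => n IHn n_gt0; apply/subsetP=> x Wx.
have [n_le1 | n_gt1] := leqP n 1.
  have -> : n = 1%N by apply/eqP; rewrite eqn_leq n_le1.
  by rewrite -[x]mul1g mem_mulg // -[x]expg1 -powmE mem_morphim // (subsetP sWZ).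
have p_pr := pdiv_prime n_gt1; set p := pdiv n in p_pr *.
have def_n : (n %/ p * p)%N = n := divnK (pdiv_dvd n).
have m_gt0 : 0 < n %/ p by rewrite divn_gt0 ?prime_gt0 // dvdn_leq ?pdiv_dvd.
have m_lt_n : n %/ p < n by rewrite ltn_Pdiv ?prime_gt1.
have /mulsgP[c _ Cc /morphimP[y Zy Wy ->] ->] := subsetP (IHn _ m_lt_n m_gt0) x Wx.
have /mulsgP[c' _ Cc' /morphimP[z Zz Wz ->] ->] := subsetP (sW_CWp p p_pr) y Wy.
have Zc' := subsetP sCZ c' Cc'.
rewrite !powmE (expgMn _ (commZ Zc' (groupX p Zz))) -expgM (mulnC p) def_n mulgA.
by apply: mem_mulg; [rewrite groupM ?groupX | rewrite -powmE mem_morphim].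
Qed.

Section Cover.
Variable d : gT.
Hypotheses (Zd : d \in Z) (covZd : twcover Z d).

Lemma commu_d_useries1 : commu d \in useries 1.
Proof. by apply: commu_useries. Qed.

Lemma twcover_useries1 : twcover (useries 1) (commu d).
Proof. exact: twcover_commu. Qed.

Lemma twcover_useries2 : twcover (useries 2) (commu (commu d)).
Proof.
exact: twcover_commu (subsetP (useries_sub 1) _ commu_d_useries1) twcover_useries1.
Qed.

Lemma useries1_sub_pow p : prime p -> odd p -> useries 1 \subset powm p @* Z.
Proof.
move=> p_pr p_odd; set K := powm p @* Z.
have sKZ : K \subset Z := powm_sub p Z.
have nKu : u \in 'N(K) := norm_powm p (subxx Z) nZu.
have KZp x : x \in Z -> x ^+ p \in K by move=> Zx; rewrite -powmE mem_morphim.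
have [dKV | dNKV] := boolP (d \in K <*> useries 1).
  by apply: subset_trans (useries_sub 1) (twcover_absorb (subxx Z) sKZ nKu Zd covZd dKV).
apply: (twcover_descent covZd (useries_sub 1) (norm_useries 1) commu_d_useries1
  twcover_useries1 sKZ nKu (prime_gt0 p_pr)).
  have /lcosetP[v Vv ->] := twpow_lcoset2 p Zd.
  rewrite bin2odd // mulnC expgM; apply: groupM; last exact: mem_joingr.
  have Zf := subsetP (useries_sub 1) _ commu_d_useries1.
  by apply/mem_joingl/groupM; apply: KZp; rewrite ?groupX.
move=> r /andP[r_gt0 r_lt_p]; apply: contra dNKV => KVdr.
have co_rp : coprime r p by rewrite coprime_sym prime_coprime // gtnNdvd.
apply: (mem_expg_coprime co_rp); last exact: mem_joingl (KZp d Zd).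
have /lcosetP[v Vv def_dr] := twpow_lcoset r (subxx Z) nZu Zd.
by rewrite -(mulgK v (d ^+ r)) -def_dr groupM // groupV mem_joingr.
Qed.

Lemma twpow_notin_sqr_useries2 r :
  d \notin powm 2 @* Z <*> useries 1 -> commu d \notin powm 2 @* Z <*> useries 2 ->
  0 < r < 4 -> twpow d r \notin powm 2 @* Z <*> useries 2.
Proof.
set K := powm 2 @* Z; move=> dNKV fNKV /andP[r_gt0 r_lt4]; apply/negP.
have KZ2 x : x \in Z -> x ^+ 2 \in K by move=> Zx; rewrite -powmE mem_morphim.
have Vf := commu_d_useries1; have Zf := subsetP (useries_sub 1) _ Vf.
have sJ21 : K <*> useries 2 \subset K <*> useries 1.
  by rewrite join_subG joing_subl (subset_trans (useries_subS 1)) ?joing_subr.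
have /lcosetP[v Vv ->] := twpow_lcoset2 r Zd.
move/groupM/(_ (mem_joingr K (groupVr Vv))); rewrite mulgK.
case: r r_gt0 r_lt4 => [|[|[|[|r]]]] // _ _.
- by rewrite expg1 mulg1 => /(subsetP sJ21) KVd; rewrite KVd in dNKV.
- rewrite expg1 => KVd2f; case/negP: fNKV; rewrite -(mulKg (d ^+ 2) (commu d)).
  by apply: groupM KVd2f; rewrite groupV mem_joingl ?KZ2.
rewrite -expgMn; last exact: commZ.
move=> KVdf3; case/negP: dNKV; rewrite -(mulgK (commu d) d).
apply: groupM; last by rewrite groupV mem_joingr.
apply: (subsetP sJ21).
have -> : d * commu d = ((d * commu d) ^+ 2)^-1 * (d * commu d) ^+ 3.
  by rewrite (expgSr _ 2) mulKg.
by apply: groupM KVdf3; rewrite groupV mem_joingl ?KZ2 ?groupM.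
Qed.

Lemma useries2_sub_sqr : useries 2 \subset powm 2 @* Z.
Proof.
set K := powm 2 @* Z.
have sKZ : K \subset Z := powm_sub 2 Z.
have nKu : u \in 'N(K) := norm_powm 2 (subxx Z) nZu.
have Vf := commu_d_useries1; have Zf := subsetP (useries_sub 1) _ Vf.
have [dKV | dNKV] := boolP (d \in K <*> useries 1).
  by apply: subset_trans (useries_sub 2) (twcover_absorb (subxx Z) sKZ nKu Zd covZd dKV).
have [fKV | fNKV] := boolP (commu d \in K <*> useries 2).
  apply: subset_trans (useries_subS 1) _.
  exact: twcover_absorb (useries_sub 1) sKZ nKu Zf twcover_useries1 fKV.
apply: (twcover_descent covZd (useries_sub 2) (norm_useries 2) (commu_useries Vf)
  twcover_useries2 sKZ nKu (isT : 0 < 4) (twpow4_mem Zd)).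
by move=> r; apply: twpow_notin_sqr_useries2.
Qed.

Lemma twpow4_sqr e : e \in Z -> twpow e 4 \in powm 2 @* Z.
Proof.
move=> Ze; apply: subsetP (twpow4_mem Ze); rewrite join_subG subxx.
exact: subset_trans (useries_subS 2) useries2_sub_sqr.
Qed.

Lemma twpow8_pow4 e : e \in Z -> twpow e 8 \in powm 4 @* Z.
Proof.
have sqr_twpow4 x : x \in Z -> exists2 t, t \in Z & twpow x 4 = t ^+ 2.
  by move/twpow4_sqr/morphimP=> [t Zt _ ->]; exists t; rewrite ?powmE.
move=> Ze; have [t Zt def_t] := sqr_twpow4 e Ze.
have [s Zs def_s] := sqr_twpow4 (commu t) (subsetP (commu_sub Z) _ (mem_morphim _ Zt Zt)).
rewrite (twpowD _ _ 4 4) def_t conjXg conjg_mulR -twpow_commg -commuE def_s.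
have cts : commute t s := commZ Zt Zs.
rewrite (expgMn _ (commuteX 2 cts)) mulgA -expgD -expgM -expgMn //.
by rewrite -powmE mem_morphim ?groupM.
Qed.

Lemma sub_cycles_sqr : Z \subset <[d]> * <[commu d]> * powm 2 @* Z.
Proof.
have sZ_dV1 : Z \subset <[d]> * useries 1 := twcover_sub_cycle (subxx Z) nZu Zd covZd.
have sV1_fV2 : useries 1 \subset <[commu d]> * useries 2 :=
  twcover_sub_cycle (useries_sub 1) (norm_useries 1) commu_d_useries1 twcover_useries1.
apply: subset_trans sZ_dV1 _; rewrite -mulgA mulgS //.
by apply: subset_trans sV1_fV2 _; rewrite mulgS ?useries2_sub_sqr.
Qed.

Lemma sqr_sub_cycle_pow4 : powm 2 @* Z \subset <[d]> * powm 4 @* Z.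
Proof.
have sKZ : powm 4 @* Z \subset Z := powm_sub 4 Z.
have KZ4 x : x \in Z -> x ^+ 4 \in powm 4 @* Z by move=> Zx; rewrite -powmE mem_morphim.
have Zf := subsetP (useries_sub 1) _ commu_d_useries1.
have sdZ : <[d]> \subset Z by rewrite cycle_subG.
have [Kd2 | Kd2] := boolP (d ^+ 2 \in powm 4 @* Z).
  have Kf2 : commu d ^+ 2 \in powm 4 @* Z.
    case/morphimP: Kd2 => t Zt _ def_d2.
    rewrite -morphX // def_d2 powmE morphX // KZ4 //.
    by rewrite (subsetP (commu_sub Z)) ?mem_morphim.
  apply: subset_trans (morphimS _ sub_cycles_sqr) _.
  rewrite !morphimMl ?mul_subG ?cycle_subG // -(mulGid (powm 4 @* Z)) mulgA.
  apply: mulgSS; first apply: mulgSS.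
  - by rewrite morphim_cycle // cycle_subG powmE mem_cycle.
  - by rewrite morphim_cycle // cycle_subG powmE.
  apply/subsetP=> _ /morphimP[_ _ /morphimP[y Zy _ ->] ->].
  by rewrite !powmE -expgM KZ4.
set Y := <[d]> <*> powm 4 @* Z; have sYZ : Y \subset Z by rewrite join_subG sdZ.
have cardZ : #|Z| <= 8 * #|powm 4 @* Z|.
  exact: twcover_card (norm_powm 4 (subxx Z) nZu) (isT : 0 < 8) (twpow8_pow4 Zd) covZd.
have cardY : 4 * #|powm 4 @* Z| <= #|Y|.
  exact: order4_card_join (subsetP (sub_abelian_norm cZZ sKZ) d Zd) (KZ4 d Zd) Kd2.
have iZY : #|Z : Y| <= 2.
  rewrite -(leq_pmul2l (cardG_gt0 Y)) Lagrange // (leq_trans cardZ) //.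
  by rewrite (_ : 8 = 4 * 2)%N // mulnAC leq_pmul2r.
rewrite -cent_joinEr ?(sub_abelian_cent2 cZZ) //.
apply/subsetP=> _ /morphimP[x Zx _ ->]; rewrite powmE.
exact: expg2_mem_index_le2 (sub_abelian_norm cZZ sYZ) iZY Zx.
Qed.

Lemma sqr_sub_cycle : powm 2 @* Z \subset <[d]>.
Proof.
have sdZ : <[d]> \subset Z by rewrite cycle_subG.
have Z2_sub_d : powm 2 @* <[d]> \subset <[d]>.
  by rewrite morphim_cycle // cycle_subG powmE mem_cycle.
apply: sub_of_mul_powm_primes (powm_sub 2 Z) sdZ _ => p p_pr.
have [-> | p_odd] := even_prime p_pr.
  apply: subset_trans sqr_sub_cycle_pow4 _; rewrite mulgS //.
  apply/subsetP=> _ /morphimP[y Zy _ ->].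
  by rewrite powmE [y ^+ 4](expgnA y 2 2) -!powmE !mem_morphim // powmE groupX.
have sZ_dZp : Z \subset <[d]> * powm p @* Z.
  apply: subset_trans (twcover_sub_cycle (subxx Z) nZu Zd covZd) _.
  by rewrite mulgS ?useries1_sub_pow.
apply: subset_trans (morphimS _ sZ_dZp) _; rewrite morphimMl ?cycle_subG //.
apply: mulgSS; first exact: Z2_sub_d.
apply/subsetP=> _ /morphimP[_ _ /morphimP[y Zy _ ->] ->].
by rewrite !powmE expgnAC -!powmE !mem_morphim // powmE groupX.
Qed.

Lemma index_cycle_le2 : #|Z : <[d]>| <= 2.
Proof.
have nCZ : Z \subset 'N(<[d]>) by rewrite sub_abelian_norm ?cycle_subG.
have Zf := subsetP (useries_sub 1) _ commu_d_useries1.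
have sZ_dfd : Z \subset <[d]> * <[commu d]> * <[d]>.
  by apply: subset_trans sub_cycles_sqr _; rewrite mulgS ?sqr_sub_cycle.
rewrite -card_quotient //; apply: leq_trans (subset_leq_card (quotientS _ sZ_dfd)) _.
rewrite quotientMidr quotientMidl quotient_cycle ?(subsetP nCZ) //.
rewrite -orderE dvdn_leq // order_dvdn -morphX ?(subsetP nCZ) //; apply/eqP/coset_id.
by rewrite (subsetP sqr_sub_cycle) // -powmE mem_morphim.
Qed.

End Cover.

End AbelianTwist.

Lemma twcover_of_factorization (gT : finGroupType) (A H : {group gT}) d u :
  u \in 'N(A) -> u \in H -> d \in A -> H :&: A = 1 ->
  A \subset <[d * u^-1]> * H -> twcover u A d.
Proof.
move=> nAu Hu Ad tiHA sA_dH x Ax.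
have /mulsgP[_ h /cycleP[j ->] Hh def_x] := subsetP sA_dH x Ax; exists j.
have Ah' : (u ^+ j)^-1 * h \in A.
  suff -> : (u ^+ j)^-1 * h = (twpow u d j)^-1 * x by rewrite groupM ?groupV ?twpow_mem.
  by rewrite def_x /twpow invMg -!mulgA mulKg.
have : (u ^+ j)^-1 * h \in H :&: A by rewrite inE groupM ?groupV ?groupX.
rewrite tiHA inE => /eqP h'1.
by rewrite def_x -(mulg1 (twpow u d j)) -h'1 /twpow -!mulgA mulKVg.
Qed.

Lemma sub_mul_of_cyclic_quotient (gT : finGroupType) (G A W H : {group gT}) :
  A <| G -> cyclic (G / A) -> W \subset G -> H \subset G ->
  W :&: A = 1 -> H :&: A = 1 -> #|W| = #|H| -> W \subset A * H.
Proof.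
move=> nsAG cycGA sWG sHG tiWA tiHA cardWH; have nAG := normal_norm nsAG.
have nAW := subset_trans sWG nAG; have nAH := subset_trans sHG nAG.
have eqWH : W / A = H / A.
  apply/eqP; rewrite (eq_subG_cyclic cycGA) ?quotientS //.
  have tiAW : A :&: W = 1 by rewrite setIC.
  have tiAH : A :&: H = 1 by rewrite setIC.
  rewrite -(card_isog (quotient_isog nAW tiAW)).
  by rewrite -(card_isog (quotient_isog nAH tiAH)) cardWH.
by rewrite -quotientK // -eqWH quotientK // mulG_subr.
Qed.

Lemma cyclic_of_TI_quotient (gT : finGroupType) (G A H : {group gT}) :
  H \subset G -> G \subset 'N(A) -> H :&: A = 1 -> cyclic (G / A) -> cyclic H.
Proof.
move=> sHG nAG tiHA cycGA; have tiAH : A :&: H = 1 by rewrite setIC.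
rewrite (isog_cyclic (quotient_isog (subset_trans sHG nAG) tiAH)).
exact: cyclicS (quotientS A sHG) cycGA.
Qed.

Lemma twcover_of_aut_factorization (gT : finGroupType) (G A H : {group gT})
    (s : {perm gT}) :
  A <| G -> cyclic (G / A) -> s \in Aut G -> s @: A = A ->
  H \subset G -> H :&: A = 1 -> G :=: s @: H * H ->
  exists2 u, u \in 'N(A) & exists2 d, d \in A & twcover u A d.
Proof.
move=> nsAG cycGA AutGs sAA sHG tiHA defG; have nAG := normal_norm nsAG.
have s_im (X : {set gT}) : X \subset G -> s @: X = autm AutGs @* X.
  by move=> sXG; rewrite morphimEsub // autmE.
pose W := (autm AutGs @* H)%G.
have sWG : W \subset G by rewrite -(im_autm AutGs) morphimS.
have tiWA : W :&: A = 1.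
  by rewrite -sAA s_im ?normal_sub // -injmI ?injm_autm // tiHA morphim1.
have sWAH : W \subset A * H.
  apply: (sub_mul_of_cyclic_quotient nsAG cycGA sWG sHG tiWA tiHA).
  by rewrite card_injm ?injm_autm.
have [h defH] := cyclicP (cyclic_of_TI_quotient sHG nAG tiHA cycGA).
have Gh : h \in G by rewrite (subsetP sHG) // defH cycle_id.
have /mulsgP[d y Ad Hy def_sh] : s h \in A * H.
  by apply: (subsetP sWAH); rewrite -(autmE AutGs) mem_morphim // defH cycle_id.
have nAy : y^-1 \in 'N(A) by rewrite groupV (subsetP nAG) ?(subsetP sHG).
exists y^-1 => //; exists d => //.
apply: (twcover_of_factorization nAy (groupVr Hy) Ad tiHA).
rewrite invgK -def_sh -(autmE AutGs) -morphim_cycle // -defH -s_im //.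
by rewrite -defG normal_sub.
Qed.

Theorem lemma3p15 (gT : finGroupType) (G A H : {group gT}) (s : {perm gT}) :
  A <| G -> abelian A -> cyclic (G / A) ->
  s \in Aut G -> #[s] = 2 -> s @: A = A ->
  H \subset G -> H :&: A = 1 -> G :=: (s @: H) * H ->
  exists2 C : {group gT}, (C \subset A) && cyclic C & #|A : C| <= 2.
Proof.
move=> nsAG cAA cycGA AutGs _ sAA sHG tiHA defG.
have [u nAu [d Ad covAd]] :=
  twcover_of_aut_factorization nsAG cycGA AutGs sAA sHG tiHA defG.
exists <[d]>%G; first by rewrite cycle_subG Ad cycle_cyclic.
by have := index_cycle_le2 cAA nAu Ad covAd.
Qed.
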